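(* Let $G$ be a maximal $3$-$\gamma_{c}$-vertex critical graph with independence number $\alpha$ and connectivity $\kappa$. Then $\alpha\leq\kappa$.
   Context: All graphs are finite, simple and connected. The connectivity $\kappa(G)$ is the minimum cardinality of a vertex set whose removal disconnects $G$. A set $D\subseteq V(G)$ is a connected dominating set of $G$ if every vertex of $G$ is in $D$ or adjacent to a vertex of $D$, and $G[D]$ is connected; $\gamma_{c}(G)$ is the minimum cardinality of such a set. $G$ is $k$-$\gamma_{c}$-edge critical if $\gamma_{c}(G)=k$ and $\gamma_{c}(G+uv)<k$ for every pair of non-adjacent vertices $u,v$. A $2$-connected graph $G$ is $k$-$\gamma_{c}$-vertex critical if $\gamma_{c}(G)=k$ and $\gamma_{c}(G-v)<k$ for every $v\in V(G)$. $G$ is maximal $k$-$\gamma_{c}$-vertex critical if it is both $k$-$\gamma_{c}$-edge critical and $k$-$\gamma_{c}$-vertex critical. *)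

(* A finite simple graph is given by a vertex set V : {set T}
   over a finType T together with a symmetric irreflexive adjacency relation
   e : rel T (only edges between vertices of V matter). *)
From mathcomp Require Import all_boot all_order.
Set Implicit Arguments. Unset Strict Implicit. Unset Printing Implicit Defensive.

Section Graphs.
Variable T : finType.

Definition simple_graph (e : rel T) := symmetric e /\ irreflexive e.

(* the induced subgraph G[V] is connected (vacuous for V empty) *)
Definition connected_on (e : rel T) (V : {set T}) : bool :=
  [forall x in V, forall y in V,
     connect (fun a b => [&& a \in V, b \in V & e a b]) x y].

Definition dominating (e : rel T) (V D : {set T}) : bool :=
  [forall v in V, (v \in D) || [exists u in D, e u v]].

Definition cds (e : rel T) (V D : {set T}) : bool :=
  [&& D \subset V, dominating e V D & connected_on e D].

(* connected domination number: minimum cardinality of a cds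
   (V itself is a cds when G is connected, so #|V| is never the default) *)
Definition gamma_c (e : rel T) (V : {set T}) : nat :=
  \big[minn/#|V|]_(D : {set T} | cds e V D) #|D|.

(* connectivity: minimum cardinality of a vertex set whose removal disconnects
   the graph; convention #|V| - 1 when no such set exists (complete graphs) *)
Definition kappa (e : rel T) (V : {set T}) : nat :=
  \big[minn/#|V|.-1]_(S : {set T} | (S \subset V) && ~~ connected_on e (V :\: S)) #|S|.

Definition independent (e : rel T) (I : {set T}) : bool :=
  [forall x in I, forall y in I, ~~ e x y].

Definition alpha (e : rel T) (V : {set T}) : nat :=
  \max_(I : {set T} | (I \subset V) && independent e I) #|I|.

Definition add_edge (e : rel T) (u v : T) : rel T :=
  fun x y => [|| e x y, (x == u) && (y == v) | (x == v) && (y == u)].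

Definition edge_critical (k : nat) (e : rel T) (V : {set T}) : Prop :=
  gamma_c e V = k /\
  forall u v, u \in V -> v \in V -> u != v -> ~~ e u v ->
    gamma_c (add_edge e u v) V < k.

Definition two_connected (e : rel T) (V : {set T}) : Prop :=
  2 < #|V| /\ 2 <= kappa e V.

(* G - v is the graph on V :\ v *)
Definition vertex_critical (k : nat) (e : rel T) (V : {set T}) : Prop :=
  two_connected e V /\ gamma_c e V = k /\
  forall v, v \in V -> gamma_c e (V :\ v) < k.

Definition maximal_vertex_critical (k : nat) (e : rel T) (V : {set T}) : Prop :=
  edge_critical k e V /\ vertex_critical k e V.

End Graphs.

(* Let I be independent with |I| >= 3 (smaller I are covered by kappa >= 2).
   Vertex criticality gives every vertex v an edge pq dominating G - v with
   neither end adjacent to v.  Edge criticality, applied to two vertices a, t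
   of I, gives such an edge through a for t, or through t for a; its other end
   is then adjacent to every vertex of I except t.  These "private" vertices of
   distinct members of I are distinct, and all members of I but at most one
   own one.  Counting private vertices inside the neighbourhood of a vertex, and
   inside a cut S whose complement has no isolated vertex, bounds the minimum
   degree and |S| from below by |I|.  When a count is tight, the private
   vertices are matched with their owners and form a clique, and one more
   application of criticality yields a contradiction. *)

From mathcomp Require Import all_boot all_order.
From mathcomp Require Import zify.
Set Implicit Arguments. Unset Strict Implicit. Unset Printing Implicit Defensive.
Import Order.TTheory.

Section Matching.
Variables (T : finType) (P : rel T) (D X : {set T}).
Hypothesis P_cover : forall t, t \in D -> exists2 x, x \in X & P t x.
Hypothesis P_inj : forall t t' x, t \in D -> t' \in D -> P t x -> P t' x -> t = t'.

Let mate t := odflt t [pick x in X | P t x].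

Let mateP t : t \in D -> mate t \in X /\ P t (mate t).
Proof.
move=> Dt; rewrite /mate; case: pickP => [x /andP [] //|none].
by have [x Xx Ptx] := P_cover Dt; move: (none x); rewrite Xx Ptx.
Qed.

Let mate_inj : {in D &, injective mate}.
Proof.
move=> t t' Dt Dt' eq_mate; have [_ Pt] := mateP Dt; have [_ Pt'] := mateP Dt'.
by apply: (P_inj Dt Dt' Pt); rewrite eq_mate.
Qed.

Let mate_sub : mate @: D \subset X.
Proof. by apply/subsetP => _ /imsetP [t Dt ->]; case: (mateP Dt). Qed.

Lemma matching_card : #|D| <= #|X|.
Proof. by rewrite -(card_in_imset mate_inj); apply: subset_leq_card mate_sub. Qed.

Hypothesis X_small : #|X| <= #|D|.

Let mate_onto : mate @: D = X.
Proof. by apply/eqP; rewrite eqEcard mate_sub (card_in_imset mate_inj). Qed.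

Lemma matching_onto x : x \in X -> exists2 t, t \in D & P t x.
Proof. by rewrite -mate_onto => /imsetP [t Dt ->]; exists t => //; case: (mateP Dt). Qed.

Lemma matching_uniq t x y : t \in D -> x \in X -> y \in X -> P t x -> P t y -> x = y.
Proof.
move=> Dt; have mate_of x' : x' \in X -> P t x' -> x' = mate t.
  rewrite -mate_onto => /imsetP [t' Dt' ->] Pt'.
  by have [_ /(P_inj Dt' Dt)-> //] := mateP Dt'.
by move=> /mate_of Ex /mate_of Ey /Ex-> /Ey->.
Qed.

End Matching.

Section Domination.
Variables (T : finType) (r : rel T) (W : {set T}).

Lemma gamma_c_le D : cds r W D -> gamma_c r W <= #|D|.
Proof. exact: (@bigmin_le_cond _ nat). Qed.

Lemma gamma_c_ltP k : gamma_c r W < k -> #|W| < k \/ exists2 D, cds r W D & #|D| < k.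
Proof.
move=> small; case: (ltnP #|W| k) => [|Wk]; [by left | right].
case: (boolP [exists D : {set T}, cds r W D && (#|D| < k)]).
  by case/existsP => D /andP [cD Dk]; exists D.
move=> none; move: small; rewrite ltnNge => /negP []; apply/(@bigmin_geP _ nat).
split=> // D cD; change (k <= #|D|); rewrite leqNgt; apply: contra none => Dk.
by apply/existsP; exists D; rewrite cD.
Qed.

Lemma dominated_pairE p q x :
  (x \in [set p; q]) || [exists u in [set p; q], r u x] = [|| x == p, x == q, r p x | r q x].
Proof.
have -> : [exists u in [set p; q], r u x] = r p x || r q x.
  apply/exists_inP/orP => [[u]|[pu|qu]].
  - by rewrite !inE => /orP [] /eqP-> ->; [left | right].
  - by exists p; rewrite ?inE ?eqxx.
  - by exists q; rewrite ?inE ?eqxx ?orbT.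
by rewrite !inE -!orbA.
Qed.

Lemma small_cds D : irreflexive r -> W != set0 -> cds r W D -> #|D| < 3 ->
  exists p q, [/\ p \in W, q \in W, (p == q) || r p q &
    forall x, x \in W -> [|| x == p, x == q, r p x | r q x]].
Proof.
move=> r_irr /set0Pn [w Ww] /and3P [D_W /forall_inP dom D_conn] D_small.
have [p [q [Dpq pq]]] : exists p q, D = [set p; q] /\ (p == q) || r p q.
  case D_card: #|D| D_small => [|[|[|//]]] _.
  - move/eqP: D_card; rewrite cards_eq0 => /eqP D0.
    by move: (dom w Ww); rewrite D0 inE /=; case/exists_inP => u; rewrite inE.
  - by move/eqP/cards1P: D_card => [d ->]; exists d, d; rewrite setUid eqxx.
  - move/eqP/cards2P: D_card => [p [q [pq Dpq]]]; exists p, q; split => //.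
    rewrite Dpq in D_conn; apply/orP; right.
    have Dp : p \in [set p; q] by rewrite !inE eqxx.
    have Dq : q \in [set p; q] by rewrite !inE eqxx orbT.
    move/forall_inP: D_conn => /(_ p Dp) /forall_inP /(_ q Dq) /connectP [[|x s]] /=.
      by move=> _ qp; move: pq; rewrite qp eqxx.
    case/andP => /and3P [_ Dx px] _ _; move: Dx px; rewrite !inE.
    by case/orP => /eqP->; rewrite ?r_irr.
exists p, q; subst D; split => //; try by apply: (subsetP D_W); rewrite !inE eqxx ?orbT.
by move=> x Wx; rewrite -dominated_pairE; apply: dom.
Qed.

Lemma pair_cds p q : symmetric r -> p \in W -> q \in W -> (p == q) || r p q ->
  (forall x, x \in W -> [|| x == p, x == q, r p x | r q x]) -> cds r W [set p; q].
Proof.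
move=> r_sym Wp Wq pq dom; apply/and3P; split.
- by apply/subsetP => x; rewrite !inE => /orP [] /eqP->.
- by apply/forall_inP => x Wx; rewrite dominated_pairE dom.
apply/forall_inP => x Dx; apply/forall_inP => y Dy.
case: (eqVneq x y) => [->|xy]; first exact: connect0.
apply: connect1; rewrite /= Dx Dy /=.
move: Dx Dy xy; rewrite !inE => /orP [] /eqP-> /orP [] /eqP->; rewrite ?eqxx //.
- by move: pq => /orP [/eqP->|]; rewrite ?eqxx.
- by rewrite r_sym; move: pq => /orP [/eqP->|]; rewrite ?eqxx.
Qed.

End Domination.

Section Graph.
Variables (T : finType) (e : rel T) (V : {set T}).
Hypotheses (e_sym : symmetric e) (e_irr : irreflexive e).

Lemma adj_neq x y : e x y -> x != y.
Proof. by apply: contraTneq => ->; rewrite e_irr. Qed.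

Definition induced (W : {set T}) : rel T := fun a b => [&& a \in W, b \in W & e a b].

Lemma connected_onP (W : {set T}) :
  reflect {in W &, forall x y, connect (induced W) x y} (connected_on e W).
Proof.
apply: (iffP forall_inP) => [conn x y Wx | conn x Wx].
  by move/forall_inP: (conn x Wx); apply.
by apply/forall_inP => y; apply: conn.
Qed.

Lemma induced_connect_sym (W : {set T}) : connect_sym (induced W).
Proof.
by apply: sym_connect_sym => a b; rewrite /induced e_sym; case: (a \in W); case: (b \in W).
Qed.

Lemma connect_induced_adj (W : {set T}) x y :
  x \in W -> y \in W -> e x y -> connect (induced W) x y.
Proof. by move=> Wx Wy exy; apply: connect1; rewrite /induced Wx Wy exy. Qed.

Definition nbhd (z : T) : {set T} := [set x in V | e z x].

Record critical_pair (p q v : T) : Prop := CriticalPair {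
  cp_p : p \in V; cp_q : q \in V; cp_pq : e p q;
  cp_pv : p != v; cp_qv : q != v; cp_np : ~~ e p v; cp_nq : ~~ e q v;
  cp_dom : forall x, x \in V -> x != v -> [|| x == p, x == q, e p x | e q x] }.

Lemma critical_pair_sym p q v : critical_pair p q v -> critical_pair q p v.
Proof.
case=> Vp Vq epq pv qv np nq dom; split=> //; first by rewrite e_sym.
by move=> x Vx xv; move: (dom x Vx xv); case: (x == p) (x == q) (e p x) (e q x) => [] [] [] [].
Qed.

Lemma critical_pair_adj p q v x :
  critical_pair p q v -> x \in V -> x != p -> x != v -> ~~ e p x -> e q x.
Proof.
case=> _ _ epq _ _ _ _ dom Vx xp xv npx; move: (dom x Vx xv).
rewrite (negbTE xp) (negbTE npx) /= => /orP [/eqP xq|//].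
by move: npx; rewrite xq epq.
Qed.

Lemma critical_pair_connected (S : {set T}) p q v :
  critical_pair p q v -> p \notin S -> q \notin S ->
  (v \in V :\: S -> exists2 y, y \in V :\: S & e v y) -> connected_on e (V :\: S).
Proof.
set W := V :\: S => cp pS qS v_nbr.
have [Vp Vq epq _ _ _ _ dom] := cp.
have Wp : p \in W by rewrite in_setD pS.
have Wq : q \in W by rewrite in_setD qS.
have reach_off x : x \in W -> x != v -> connect (induced W) p x.
  move=> Wx xv; have Vx : x \in V by move: Wx; rewrite in_setD => /andP [].
  case/or4P: (dom x Vx xv) => [/eqP->|/eqP->|epx|eqx]; first exact: connect0.
  - exact: connect_induced_adj.
  - exact: connect_induced_adj.
  - exact: connect_trans (connect_induced_adj Wp Wq epq) (connect_induced_adj Wq Wx eqx).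
have reach x : x \in W -> connect (induced W) p x.
  move=> Wx; case: (eqVneq x v) => [exv|]; last exact: reach_off.
  subst x; have [y Wy evy] := v_nbr Wx.
  apply: connect_trans (reach_off y Wy _) _; first by rewrite eq_sym adj_neq.
  by apply: connect_induced_adj; rewrite // e_sym.
apply/connected_onP => x y Wx Wy.
by apply: connect_trans (reach y Wy); rewrite induced_connect_sym reach.
Qed.

Lemma add_edgeC u v x y : add_edge e u v x y = add_edge e v u x y.
Proof. by rewrite /add_edge; congr (_ || _); apply: orbC. Qed.

Lemma add_edge_off u v x y : x != u -> x != v -> add_edge e u v x y = e x y.
Proof. by move=> xu xv; rewrite /add_edge (negbTE xu) (negbTE xv) /= orbF. Qed.

Lemma add_edge_sym u v : symmetric (add_edge e u v).
Proof.
move=> x y; rewrite /add_edge e_sym; congr (_ || _).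
by rewrite orbC andbC (andbC (y == v)).
Qed.

Lemma add_edge_irr u v : u != v -> irreflexive (add_edge e u v).
Proof.
move=> uv x; rewrite /add_edge e_irr /=; apply/negP => /orP [] /andP [/eqP-> /eqP vu].
- by move/eqP: uv.
- by move: uv; rewrite vu eqxx.
Qed.

Section MaximalCritical.
Hypothesis G_conn : connected_on e V.
Hypothesis V_gt2 : 2 < #|V|.
Hypothesis gamma3 : gamma_c e V = 3.

Lemma no_dominating_pair p q : p \in V -> q \in V -> (p == q) || e p q ->
  (forall x, x \in V -> [|| x == p, x == q, e p x | e q x]) -> False.
Proof.
move=> Vp Vq pq dom; have := gamma_c_le (pair_cds e_sym Vp Vq pq dom).
by rewrite gamma3 cards2; case: (p != q).
Qed.

Lemma exists_nbr v : v \in V -> exists2 x, x \in V & e v x.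
Proof.
move=> Vv; have [y Vy yv] : exists2 y, y \in V & y != v.
  have : 0 < #|V :\ v| by move: V_gt2; rewrite (cardsD1 v V) Vv add1n ltnS => /ltnW.
  by rewrite card_gt0 => /set0Pn [y /setD1P [yv Vy]]; exists y.
move/connected_onP: G_conn => /(_ v y Vv Vy) /connectP [[|x s]] /=.
  by move=> _ yv'; move: yv; rewrite yv' eqxx.
by case/andP => /and3P [_ Vx vx] _ _; exists x.
Qed.

Lemma no_dominating_vertex_setD1 d v : d \in V -> v \in V ->
  (forall x, x \in V -> x != v -> (x == d) || e d x) -> False.
Proof.
move=> Vd Vv dom; case: (boolP (e d v)) => [dv|ndv].
  have dd : (d == d) || e d d by rewrite eqxx.
  apply: (no_dominating_pair Vd Vd dd) => x Vx.
  case: (eqVneq x v) => [->|xv]; first by rewrite dv !orbT.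
  by case/orP: (dom x Vx xv) => ->; rewrite ?orbT.
have [x Vx vx] := exists_nbr Vv.
have dx : e d x.
  have xv : x != v by rewrite eq_sym adj_neq.
  case/orP: (dom x Vx xv) => [/eqP xd|//].
  by move: ndv; rewrite -xd e_sym vx.
have ddx : (d == x) || e d x by rewrite dx orbT.
apply: (no_dominating_pair Vd Vx ddx) => y Vy.
case: (eqVneq y v) => [->|yv]; first by rewrite (e_sym x) vx !orbT.
by case/orP: (dom y Vy yv) => ->; rewrite ?orbT.
Qed.

Hypothesis kappa2 : 2 <= kappa e V.

Lemma connected_setD1 v : v \in V -> connected_on e (V :\ v).
Proof.
move=> Vv; apply/negPn/negP => disc.
have : kappa e V <= #|[set v]|.
  by apply: (@bigmin_le_cond _ nat); rewrite sub1set Vv disc.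
by rewrite cards1 leqNgt (leq_trans _ kappa2).
Qed.

Hypothesis vertex_crit : forall v, v \in V -> gamma_c e (V :\ v) < 3.

Lemma vertex_critical_pairs v : v \in V -> exists p q, critical_pair p q v.
Proof.
move=> Vv; have [D cD D3] : exists2 D, cds e (V :\ v) D & #|D| < 3.
  case: (gamma_c_ltP (vertex_crit Vv)) => [small|//].
  exists (V :\ v) => //; apply/and3P; split => //; last exact: connected_setD1.
  by apply/forall_inP => x ->.
have nonempty : V :\ v != set0.
  by have [x Vx vx] := exists_nbr Vv; apply/set0Pn; exists x; rewrite in_setD1 Vx eq_sym adj_neq.
have [p [q [/setD1P [pv Vp] /setD1P [qv Vq] pq dom]]] := small_cds e_irr nonempty cD D3.
have dom_off x : x \in V -> x != v -> [|| x == p, x == q, e p x | e q x].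
  by move=> Vx xv; apply: dom; rewrite in_setD1 xv.
case: (eqVneq p q) pq => [eqpq _|_ /= epq].
  subst q; exfalso; apply: (no_dominating_vertex_setD1 Vp Vv) => x Vx xv.
  by move: (dom_off x Vx xv); case: (x == p); case: (e p x).
have nadj y : y \in [:: p; q] -> ~~ e y v.
  have pq : (p == q) || e p q by rewrite epq orbT.
  move=> py; apply/negP => yv; apply: (no_dominating_pair Vp Vq pq).
  move=> x Vx; case: (eqVneq x v) => [->|xv]; last exact: dom_off.
  by move: py; rewrite !inE => /orP [] /eqP <-; rewrite yv !orbT.
by exists p, q; split => //; apply: nadj; rewrite !inE eqxx ?orbT.
Qed.

Hypothesis edge_crit : forall u v, u \in V -> v \in V -> u != v -> ~~ e u v ->
  gamma_c (add_edge e u v) V < 3.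

Lemma add_edge_pair_at u v q : u \in V -> v \in V -> u != v -> ~~ e u v -> q \in V ->
  (u == q) || add_edge e u v u q ->
  (forall x, x \in V -> [|| x == u, x == q, add_edge e u v u x | add_edge e u v q x]) ->
  (forall x, x \in V -> [|| x == u, x == v, e u x | e v x]) \/ exists w, critical_pair u w v.
Proof.
move=> Vu Vv uv nuv Vq uq dom.
have e'u x : add_edge e u v u x = e u x || (x == v).
  by rewrite /add_edge eqxx (negbTE uv) /= orbF.
case: (eqVneq q v) => [qv|qv].
  left => x Vx; move: (dom x Vx); rewrite e'u qv /add_edge eqxx (eq_sym v u) (negbTE uv) /=.
  by case: (x == u) (x == v) (e u x) (e v x) => [] [] [] [].
case: (eqVneq q u) => [qu|qu].
  exfalso; subst q; apply: (no_dominating_vertex_setD1 Vu Vv) => x Vx xv.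
  by move: (dom x Vx); rewrite e'u (negbTE xv) orbF; case: (x == u) (e u x) => [] [].
rewrite e'u (negbTE qv) orbF eq_sym (negbTE qu) /= in uq.
have dom_off x : x \in V -> x != v -> [|| x == u, x == q, e u x | e q x].
  by move=> Vx xv; move: (dom x Vx); rewrite e'u add_edge_off // (negbTE xv) orbF.
case: (boolP (e q v)) => [eqv|nqv].
  exfalso; have uq' : (u == q) || e u q by rewrite uq orbT.
  apply: (no_dominating_pair Vu Vq uq') => x Vx.
  by case: (eqVneq x v) => [->|xv]; [rewrite eqv !orbT | apply: dom_off].
by right; exists q; split.
Qed.

Lemma edge_critical_pairs u v : u \in V -> v \in V -> u != v -> ~~ e u v ->
  (forall x, x \in V -> [|| x == u, x == v, e u x | e v x]) \/
  (exists w, critical_pair u w v) \/ (exists w, critical_pair v w u).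
Proof.
move=> Vu Vv uv nuv; pose e' := add_edge e u v.
have [D cD D3] : exists2 D, cds e' V D & #|D| < 3.
  by case: (gamma_c_ltP (edge_crit Vu Vv uv nuv)) => [|//]; rewrite ltnNge V_gt2.
have nonempty : V != set0 by apply/set0Pn; exists u.
have [p [q [Vp Vq pq dom]]] := small_cds (add_edge_irr uv : irreflexive e') nonempty cD D3.
have [a [b [a_end Vb ab dom_ab]]] : exists p q, [/\ (p == u) || (p == v), q \in V,
    (p == q) || e' p q & forall x, x \in V -> [|| x == p, x == q, e' p x | e' q x]].
  case: (boolP ((p == u) || (p == v))) => [pe|pn]; first by exists p, q.
  case: (boolP ((q == u) || (q == v))) => [qe|qn].
    exists q, p; split => //; first by rewrite /e' eq_sym add_edge_sym.
    by move=> x Vx; move: (dom x Vx); case: (x == p) (x == q) (e' p x) (e' q x) => [] [] [] [].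
  exfalso; move: pn qn; rewrite !negb_or => /andP [pu pv] /andP [qu qv].
  have epq : (p == q) || e p q by rewrite -(add_edge_off q pu pv).
  apply: (no_dominating_pair Vp Vq epq) => x Vx.
  by rewrite -(add_edge_off x pu pv) -(add_edge_off x qu qv) dom.
case/orP: a_end => /eqP ae; subst a.
  by case: (add_edge_pair_at Vu Vv uv nuv Vb ab dom_ab) => [|?]; [left | right; left].
have [vu nvu] : v != u /\ ~~ e v u by rewrite eq_sym e_sym.
have vb : (v == b) || add_edge e v u v b by rewrite -(add_edgeC u v).
case: (add_edge_pair_at Vv Vu vu nvu Vb vb); last by right; right.
- by move=> x Vx; rewrite -!(add_edgeC u v) dom_ab.
- move=> dom'; left => x Vx; move: (dom' x Vx).
  by case: (x == u) (x == v) (e u x) (e v x) => [] [] [] [].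
Qed.

End MaximalCritical.

Section Bounds.

Hypothesis vertex_pairs : forall v, v \in V -> exists p q, critical_pair p q v.
Hypothesis edge_pairs : forall u v, u \in V -> v \in V -> u != v -> ~~ e u v ->
  (forall x, x \in V -> [|| x == u, x == v, e u x | e v x]) \/
  (exists w, critical_pair u w v) \/ (exists w, critical_pair v w u).

Lemma exists_nbr_not_adj z w : z \in V -> w \in V -> z != w ->
  exists n, [/\ n \in V, e z n, n != w & ~~ e w n].
Proof.
move=> Vz Vw zw; have [p [q [Vp Vq epq pw qw np nq dom]]] := vertex_pairs Vw.
have [nq' np'] : ~~ e w q /\ ~~ e w p by rewrite !(e_sym w).
case/or4P: (dom z Vz zw) => [/eqP->|/eqP->|epz|eqz].
- by exists q; split.
- by exists p; split; rewrite // e_sym.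
- by exists p; split; rewrite // e_sym.
- by exists q; split; rewrite // e_sym.
Qed.

Section Independent.
Variable I : {set T}.
Hypotheses (I_V : I \subset V) (I_indep : {in I &, forall x y, ~~ e x y}).
Hypothesis I_gt2 : 2 < #|I|.

Lemma indep_V x : x \in I -> x \in V.
Proof. exact: subsetP. Qed.

Definition private (t w : T) : bool :=
  [&& w \in V, w \notin I, ~~ e w t & [forall i in I, (i != t) ==> e w i]].

Lemma privateP t w : private t w ->
  [/\ w \in V, w \notin I, ~~ e w t & {in I, forall i, i != t -> e w i}].
Proof.
case/and4P=> Vw Iw nwt /forall_inP adj; split=> // i Ii it.
by move: (adj i Ii); rewrite it.
Qed.

Lemma private_uniq t t' w : t \in I -> private t w -> private t' w -> t = t'.
Proof.
move=> It /privateP [_ _ nwt _] /privateP [_ _ _ adj]; apply/eqP/negPn/negP => tt'.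
by move: nwt; rewrite adj.
Qed.

Lemma critical_pair_private a w t : a \in I -> t \in I -> critical_pair a w t -> private t w.
Proof.
move=> Ia It [_ Vw eaw _ wt _ nwt dom].
have Iw : w \notin I by apply: contraL eaw; apply: I_indep.
apply/and4P; split=> //; apply/forall_inP => i Ii; apply/implyP => it.
case/or4P: (dom i (indep_V Ii) it) => [/eqP->|/eqP iw|eai|//]; first by rewrite e_sym.
- by move: Ii; rewrite iw (negbTE Iw).
- by move: eai; rewrite (negbTE (I_indep Ia Ii)).
Qed.

Lemma critical_pair_private_adj t t' w x : t \in I -> t' \in I ->
  critical_pair t w t' -> private t x -> e w x.
Proof.
move=> It It' cp /privateP [Vx Ix nxt _].
apply: (critical_pair_adj cp Vx); last by rewrite e_sym.
- by apply: contraNneq Ix => ->.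
- by apply: contraNneq Ix => ->.
Qed.

Lemma indep_arc a t : a \in I -> t \in I -> a != t ->
  (exists w, critical_pair a w t) \/ (exists w, critical_pair t w a).
Proof.
move=> Ia It a_t; have [c] : exists c, c \in I :\ a :\ t.
  apply/set0Pn; rewrite -card_gt0.
  move: I_gt2; rewrite (cardsD1 a I) Ia (cardsD1 t (I :\ a)); case: (t \in I :\ a) => /=; lia.
rewrite !in_setD1 => /and3P [ct ca Ic].
case: (edge_pairs (indep_V Ia) (indep_V It) a_t (I_indep Ia It)) => [dom|//].
move: (dom c (indep_V Ic)).
by rewrite (negbTE ca) (negbTE ct) (negbTE (I_indep Ia Ic)) (negbTE (I_indep It Ic)).
Qed.

Lemma unique_arc_adj a0 t x n : a0 \in I -> t \in I -> a0 != t ->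
  (forall u, ~ critical_pair t u a0) -> (forall u, critical_pair a0 u t -> u = x) ->
  n \in V -> n \notin I -> ~~ e a0 n -> e x n.
Proof.
move=> Ia0 It a0t no_arc x_arc Vn In a0n.
case: (indep_arc Ia0 It a0t) => [[u cp]|[u /no_arc //]].
have ux := x_arc u cp; rewrite ux in cp; apply: (critical_pair_adj cp Vn) => //.
- by apply: contraNneq In => ->.
- by apply: contraNneq In => ->.
Qed.

Definition owners (A X : {set T}) : {set T} := [set t in A | [exists x in X, private t x]].

Lemma ownersP (A X : {set T}) t :
  reflect (t \in A /\ exists2 x, x \in X & private t x) (t \in owners A X).
Proof. by rewrite inE; apply: (iffP andP) => [[At /exists_inP]|[At /exists_inP]]. Qed.

Section Owners.
Variables A X : {set T}.
Hypothesis A_I : A \subset I.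
Hypothesis A_closed : forall a t u, a \in A -> t \in A -> critical_pair a u t -> u \in X.

Let owners_cover t : t \in owners A X -> exists2 x, x \in X & private t x.
Proof. by case/ownersP. Qed.

Let owners_inj t t' x : t \in owners A X -> t' \in owners A X ->
  private t x -> private t' x -> t = t'.
Proof. by case/ownersP => /(subsetP A_I) It _ _; apply: private_uniq. Qed.

Lemma owners_card : #|owners A X| <= #|X|.
Proof. exact: matching_card owners_cover owners_inj. Qed.

Lemma owners_almost_all : #|A| <= #|owners A X| + 1.
Proof.
have sub : owners A X \subset A by apply/subsetP => t /ownersP [].
rewrite -(setIidPr sub) -(cardsID (owners A X) A) leq_add2l.
apply/card_le1_eqP => a a'; rewrite !inE => /andP [naX Aa] /andP [na'X Aa'].
case: (eqVneq a a') => // aa'; exfalso.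
have [Ia Ia'] := (subsetP A_I a Aa, subsetP A_I a' Aa').
case: (indep_arc Ia Ia' aa') => [[u cp]|[u cp]].
- apply: (negP na'X); rewrite Aa'; apply/exists_inP; exists u.
    exact: A_closed cp.
  exact: critical_pair_private cp.
- apply: (negP naX); rewrite Aa; apply/exists_inP; exists u.
    exact: A_closed cp.
  exact: critical_pair_private cp.
Qed.

Section Tight.
Hypothesis X_tight : #|X| <= #|owners A X|.

Lemma owner_of x : x \in X -> exists2 t, t \in owners A X & private t x.
Proof. exact: matching_onto owners_cover owners_inj X_tight x. Qed.

Lemma owner_private_uniq t x y : t \in owners A X -> x \in X -> y \in X ->
  private t x -> private t y -> x = y.
Proof. exact: matching_uniq owners_cover owners_inj X_tight t x y. Qed.

Lemma owners_clique x y : x \in X -> y \in X -> x != y -> e x y.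
Proof.
move=> Xx Xy xy.
have [t Dt tx] := owner_of Xx; have [t' Dt' t'y] := owner_of Xy.
have [At At'] : t \in A /\ t' \in A by case/ownersP: Dt; case/ownersP: Dt'.
have [It It'] := (subsetP A_I t At, subsetP A_I t' At').
have tt' : t != t'.
  by apply: contraNneq xy => eqt; apply/eqP/(owner_private_uniq Dt); rewrite // eqt.
case: (indep_arc It It' tt') => [[u cp]|[u cp]].
- have eu : u = y.
    apply: (owner_private_uniq Dt') => //; first exact: A_closed cp.
    exact: critical_pair_private cp.
  by rewrite e_sym; apply: (critical_pair_private_adj It It' _ tx); rewrite -eu.
- have eu : u = x.
    apply: (owner_private_uniq Dt) => //; first exact: A_closed cp.
    exact: critical_pair_private cp.
  by apply: (critical_pair_private_adj It' It _ t'y); rewrite -eu.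
Qed.

Lemma tight_owners_nbhd_contra z : z \in V -> X \subset nbhd z -> owners A X != set0 ->
  (forall n t x, n \in nbhd z -> n \notin X -> t \in owners A X -> private t x -> x \in X ->
     e x n) -> False.
Proof.
move=> Vz X_z /set0Pn [t Dt] outer.
have [x Xx tx] := owners_cover Dt.
have zx : e z x by have := subsetP X_z x Xx; rewrite inE => /andP [].
have [Vx _ _ _] := privateP tx.
have [n [Vn zn nx xn]] := exists_nbr_not_adj Vz Vx (adj_neq zx).
case: (boolP (n \in X)) => Xn.
- by move: xn; rewrite owners_clique // eq_sym.
- by move: xn; rewrite (outer n t x) // inE Vn zn.
Qed.

End Tight.
End Owners.

Lemma nbhd_sub_indep_pair_contra z b a : z \notin I -> nbhd z \subset I -> a \in I ->
  critical_pair b z a -> False.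
Proof.
move=> Iz zI Ia [Vb Vz ebz _ _ _ nza dom].
have nbr_I n : e z n -> n \in V -> n \in I by move=> zn Vn; apply: (subsetP zI); rewrite inE Vn zn.
have [n [m [[Vn Vm enm _ mb nnb nmb _] zn]]] : exists n m, critical_pair n m b /\ e z n.
  have [p [q cp]] := vertex_pairs Vb; have [_ _ _ _ _ npb nqb dom'] := cp.
  have zb : z != b by rewrite eq_sym adj_neq.
  case/or4P: (dom' z Vz zb) => [/eqP zp|/eqP zq|epz|eqz].
  - by move: npb; rewrite -zp e_sym ebz.
  - by move: nqb; rewrite -zq e_sym ebz.
  - by exists p, q; rewrite e_sym.
  - by exists q, p; split; [exact: critical_pair_sym | rewrite e_sym].
have In := nbr_I n zn Vn.
have Im : m \notin I by apply: contraL enm; apply: I_indep.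
have ma : m != a by apply: contraNneq Im => ->.
case/or4P: (dom m Vm ma) => [/eqP mb'|/eqP mz|ebm|ezm].
- by move: mb; rewrite mb' eqxx.
- by move: nmb; rewrite mz e_sym ebz.
- by move: nmb; rewrite e_sym ebm.
- by move: Im; rewrite nbr_I.
Qed.

Lemma nbhd_sub_indep_contra z a : z \in V -> z \notin I -> nbhd z \subset I ->
  a \in I -> ~~ e z a -> False.
Proof.
move=> Vz Iz zI Ia nza.
have za : z != a by apply: contraNneq Iz => ->.
have [b [Vb zb ba _]] := exists_nbr_not_adj Vz (indep_V Ia) za.
have Ib : b \in I by apply: (subsetP zI); rewrite inE Vb zb.
case: (indep_arc Ib Ia ba) => [[w cp]|[w cp]].
- have [Vw Iw _ adj] := privateP (critical_pair_private Ib Ia cp).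
  case: (eqVneq w z) => [ewz|wz]; first by subst w; apply: (nbhd_sub_indep_pair_contra Iz zI Ia cp).
  have zw : z != w by rewrite eq_sym.
  have [n [Vn zn _ wn]] := exists_nbr_not_adj Vz Vw zw.
  have In : n \in I by apply: (subsetP zI); rewrite inE Vn zn.
  have na : n != a by apply: contraNneq nza => <-.
  by move: wn; rewrite adj.
- have [Vw Iw _ _] := privateP (critical_pair_private Ia Ib cp).
  have ewz : e w z by apply: (critical_pair_adj cp Vz za (adj_neq zb)); rewrite e_sym.
  by move: Iw; rewrite (subsetP zI) // inE Vw e_sym.
Qed.

Lemma indep_le_deg_out z : z \in V -> z \notin I -> #|I| <= #|nbhd z|.
Proof.
move=> Vz Iz; set A := I :\: nbhd z; set X := nbhd z :\: I.
have A_I : A \subset I by apply: subsetDl.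
have A_closed a t u : a \in A -> t \in A -> critical_pair a u t -> u \in X.
  rewrite /A /X !in_setD => /andP [za Ia] /andP [zt It] cp.
  have [Vu Iu _ _] := privateP (critical_pair_private Ia It cp).
  have neq_z x : x \in I -> z != x by move=> Ix; apply: contraNneq Iz => ->.
  rewrite Iu inE Vu e_sym /=; apply: (critical_pair_adj cp) => //; rewrite ?neq_z //.
  by rewrite e_sym; move: za; rewrite inE (indep_V Ia).
rewrite -(cardsID (nbhd z) I) -(cardsID I (nbhd z)) setIC leq_add2l -/A -/X.
rewrite leqNgt; apply/negP => XA.
have owned := owners_almost_all A_I A_closed.
have own_X : #|owners A X| <= #|X| by apply: owners_card.
have X_tight : #|X| <= #|owners A X| by lia.
have nzA a : a \in A -> ~~ e z a.
  by rewrite /A in_setD inE => /andP [nza /indep_V Va]; rewrite Va in nza.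
case: (eqVneq (owners A X) set0) => [no_owner|some_owner].
- have [a Aa] : exists a, a \in A by apply/set0Pn; rewrite -card_gt0; lia.
  apply: (nbhd_sub_indep_contra Vz Iz _ (subsetP A_I a Aa) (nzA a Aa)).
  have X0 : X = set0.
    by apply/eqP; rewrite -cards_eq0 -leqn0 (leq_trans X_tight) // no_owner cards0.
  apply/subsetP => n zn; apply/negPn/negP => In.
  by have := in_set0 n; rewrite -X0 in_setD zn In.
- apply: (tight_owners_nbhd_contra A_I A_closed X_tight Vz (subsetDl _ _) some_owner).
  move=> n t x zn Xn /ownersP [At _] tx Xx.
  have In : n \in I by move: Xn; rewrite in_setD zn andbT negbK.
  have [_ _ _ adj] := privateP tx; apply: adj => //.
  by apply: contraNneq (nzA t At) => <-; move: zn; rewrite inE => /andP [].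
Qed.

Lemma private_nbhd z t u : z \in I -> t != z -> private t u -> u \in nbhd z.
Proof.
by move=> Iz tz /privateP [Vu _ _ adj]; rewrite inE Vu e_sym adj // eq_sym.
Qed.

Lemma indep_deg_in_owners_contra z a0 : z \in I -> a0 \in I :\ z ->
  a0 \notin owners (I :\ z) (nbhd z) -> #|nbhd z| <= #|I :\ z| -> False.
Proof.
set A := I :\ z; set X := nbhd z => Iz Aa0 a0_free small.
have A_I : A \subset I by apply: subsetDl.
have [a0z Ia0] := setD1P Aa0.
have a0_priv u : ~~ private a0 u.
  apply/negP => a0u; case/negP: a0_free; apply/ownersP; split=> //; exists u => //.
  exact: private_nbhd Iz a0z a0u.
have Vz := indep_V Iz.
have za0 : z != a0 by rewrite eq_sym.
have [n0 [Vn0 zn0 _ a0n0]] := exists_nbr_not_adj Vz (indep_V Ia0) za0.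
have Xn0 : n0 \in X by rewrite inE Vn0 zn0.
have In0 : n0 \notin I by apply: contraL zn0; apply: I_indep.
set X0 := X :\ n0.
have X0_private t u : t \in A -> private t u -> u \in X0.
  move=> At tu; have [tz It] := setD1P At.
  have a0t : a0 != t by apply: contraNneq (a0_priv u) => ->.
  rewrite in_setD1 (private_nbhd Iz tz tu) andbT.
  have [_ _ _ adj] := privateP tu.
  by apply: contraTneq (adj a0 Ia0 a0t) => ->; rewrite e_sym.
have closed0 a t u : a \in A -> t \in A -> critical_pair a u t -> u \in X0.
  move=> Aa At cp; apply: (X0_private t) => //.
  exact: critical_pair_private (subsetP A_I a Aa) (subsetP A_I t At) cp.
have owned := owners_almost_all A_I closed0.
have X0_card : #|X| = #|X0| + 1 by rewrite (cardsD1 n0 X) Xn0 addnC.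
have A_card : #|I| = #|A| + 1 by rewrite (cardsD1 z I) Iz addnC.
have X0_tight : #|X0| <= #|owners A X0| by clear -small owned X0_card A_card; lia.
have some_owner : owners A X0 != set0.
  by rewrite -card_gt0; clear -I_gt2 small owned X0_card A_card; lia.
apply: (tight_owners_nbhd_contra A_I closed0 X0_tight Vz (subsetDl _ _) some_owner).
move=> n t x zn X0n Dt tx X0x.
have -> : n = n0 by apply/eqP; move: X0n; rewrite in_setD1 zn andbT negbK.
have /ownersP [At _] := Dt; have It := subsetP A_I t At.
apply: (unique_arc_adj Ia0 It _ _ _ Vn0 In0 a0n0).
- by apply: contraNneq (a0_priv x) => ->.
- by move=> u /(critical_pair_private It Ia0); apply/negP.
move=> u cp; apply: (owner_private_uniq A_I X0_tight Dt _ X0x _ tx).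
- exact: closed0 Aa0 At cp.
- exact: critical_pair_private Ia0 It cp.
Qed.

Lemma indep_le_deg_in z : z \in I -> #|I| <= #|nbhd z|.
Proof.
move=> Iz; set A := I :\ z; set X := nbhd z.
have A_I : A \subset I by apply: subsetDl.
have closed a t u : a \in A -> t \in A -> critical_pair a u t -> u \in X.
  move=> Aa At cp; have [tz It] := setD1P At.
  exact: private_nbhd Iz tz (critical_pair_private (subsetP A_I a Aa) It cp).
have A_card : #|I| = #|A| + 1 by rewrite (cardsD1 z I) Iz addnC.
rewrite A_card leqNgt addn1 ltnS; apply/negP => small.
case: (boolP (A \subset owners A X)) => [all_owned|/subsetPn [a0 Aa0 a0_free]]; last first.
  exact: indep_deg_in_owners_contra Iz Aa0 a0_free small.
have A_owned : #|A| <= #|owners A X| := subset_leq_card all_owned.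
have X_tight : #|X| <= #|owners A X| := leq_trans small A_owned.
have some_owner : owners A X != set0.
  by rewrite -card_gt0; clear -I_gt2 A_card A_owned; lia.
apply: (tight_owners_nbhd_contra A_I closed X_tight (indep_V Iz) (subxx _) some_owner).
by move=> n t x zn; rewrite zn.
Qed.

Lemma indep_le_deg z : z \in V -> #|I| <= #|nbhd z|.
Proof.
by move=> Vz; case: (boolP (z \in I)) => [/indep_le_deg_in|/(indep_le_deg_out Vz)].
Qed.

Section Cut.
Variable S : {set T}.
Local Notation W := (V :\: S).
Hypothesis W_disconnected : ~~ connected_on e W.
Hypothesis W_no_isolated : forall x, x \in W -> exists2 y, y \in W & e x y.

Lemma cut_meets_pair p q v : critical_pair p q v -> (p \in S) || (q \in S).
Proof.
move=> cp; apply/negPn/negP; rewrite negb_or => /andP [pS qS].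
by case/negP: W_disconnected; apply: critical_pair_connected cp pS qS _ => /W_no_isolated.
Qed.

Lemma cut_closed a u t : a \in I :\: S -> critical_pair a u t -> u \in S :\: I.
Proof.
rewrite in_setD => /andP [aS Ia] cp.
have uS : u \in S by move: (cut_meets_pair cp); rewrite (negbTE aS).
by rewrite in_setD uS andbT; apply: contraL (cp_pq cp); apply: I_indep.
Qed.

Lemma exists_far_vertex a : a \in W -> exists2 z, z \in W :\: I & ~~ connect (induced W) a z.
Proof.
move=> Wa; have [y Wy ay] : exists2 y, y \in W & ~~ connect (induced W) a y.
  case: (boolP [forall y in W, connect (induced W) a y]) => [/forall_inP a_all|]; last first.
    by case/forall_inPn => y; exists y.
  case/negP: W_disconnected; apply/connected_onP => x y Wx Wy.
  by apply: connect_trans (a_all y Wy); rewrite induced_connect_sym a_all.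
have [y' Wy' yy'] := W_no_isolated Wy.
have ay' : ~~ connect (induced W) a y'.
  apply: contra ay => ay'; apply: connect_trans ay' _.
  by apply: connect_induced_adj; rewrite // e_sym.
case: (boolP (y \in I)) => Iy; last by exists y; rewrite // in_setD Iy.
exists y' => //; rewrite in_setD Wy' andbT.
by apply: contraL yy'; apply: I_indep.
Qed.

(* Taking [z] outside [I] is what excludes the third alternative of
   [edge_pairs] in [far_vertex_adj]. *)
Section FarVertex.
Variable a0 : T.
Hypothesis a0_A : a0 \in I :\: S.
Hypothesis a0_free : a0 \notin owners (I :\: S) (S :\: I).
Hypothesis R_tight : #|S :\: I| <= #|owners (I :\: S) (S :\: I)|.
Variable z : T.
Hypothesis z_far : z \in W :\: I.
Hypothesis z_sep : ~~ connect (induced W) a0 z.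

Let A_I : I :\: S \subset I. Proof. exact: subsetDl. Qed.

Let z_neq_a0 : z != a0.
Proof. by apply: contraNneq z_sep => ->; apply: connect0. Qed.

Let a0_nadj_z : ~~ e a0 z.
Proof.
have [Ia0 a0S] := setDP a0_A; have [Wz _] := setDP z_far.
by apply: contra z_sep => a0z; apply: connect_induced_adj; rewrite // in_setD a0S indep_V.
Qed.

Lemma cut_owner r : r \in S :\: I ->
  exists2 t, t \in owners (I :\: S) (S :\: I) & private t r.
Proof. exact: owner_of A_I R_tight r. Qed.

Lemma cut_nonadj_a0 x : x \in S -> ~~ e x a0 -> x \in I.
Proof.
move=> xS xa0; apply/negPn/negP => Ix.
have xR : x \in S :\: I by rewrite in_setD Ix.
have [t Dt tx] := cut_owner xR.
have a0t : a0 != t by apply: contraNneq a0_free => ->.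
have [_ _ _ adj] := privateP tx.
by move: xa0; rewrite adj // (subsetP A_I a0 a0_A).
Qed.

Lemma far_vertex_adj b : b \in S -> b \in I -> e z b.
Proof.
move=> bS Ib.
have [Ia0 a0S] := setDP a0_A; have [/setDP [Vz zS] Iz] := setDP z_far.
have nza0 : ~~ e z a0 by rewrite e_sym.
case: (edge_pairs Vz (indep_V Ia0) z_neq_a0 nza0) => [dom|[[w cp]|[w cp]]].
- case/or4P: (dom b (indep_V Ib)) => [/eqP bz|/eqP ba0|//|ea0b].
  + by move: zS; rewrite -bz bS.
  + by move: a0S; rewrite -ba0 bS.
  + by move: ea0b; rewrite (negbTE (I_indep Ia0 Ib)).
- have wS : w \in S by move: (cut_meets_pair cp); rewrite (negbTE zS).
  have Iw := cut_nonadj_a0 wS (cp_nq cp).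
  have [_ _ _ adj] := privateP (critical_pair_private Iw Ia0 (critical_pair_sym cp)).
  by apply: adj => //; apply: contraNneq a0S => <-.
- have [t Dt tw] := cut_owner (cut_closed a0_A cp).
  have /ownersP [/setDP [It _] _] := Dt.
  have a0t : a0 != t by apply: contraNneq a0_free => ->.
  have [_ Iw nwt _] := privateP tw.
  have tz : t != z by apply: contraNneq Iz => <-.
  case/or4P: (cp_dom cp (indep_V It) tz) => [/eqP ta0|/eqP tw'|ea0t|ewt].
  + by move: a0t; rewrite ta0 eqxx.
  + by move: Iw; rewrite -tw' It.
  + by move: ea0t; rewrite (negbTE (I_indep Ia0 It)).
  + by move: nwt; rewrite ewt.
Qed.

Lemma far_vertex_contra : False.
Proof.
have [Ia0 _] := setDP a0_A; have [/setDP [Vz _] Iz] := setDP z_far.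
have [p [q [cp pS]]] : exists p q, critical_pair p q z /\ p \in S.
  have [p [q cp]] := vertex_pairs Vz.
  case/orP: (cut_meets_pair cp) => [pS|qS]; first by exists p, q.
  by exists q, p; split=> //; apply: critical_pair_sym.
have pR : p \in S :\: I.
  rewrite in_setD pS andbT; apply: contra (cp_np cp) => Ip.
  by rewrite e_sym far_vertex_adj.
have [t Dt tp] := cut_owner pR.
have /ownersP [At _] := Dt; have [It _] := setDP At.
have a0t : a0 != t by apply: contraNneq a0_free => ->.
case/negP: (cp_np cp); apply: (unique_arc_adj Ia0 It a0t _ _ Vz Iz a0_nadj_z).
- move=> u cpu; case/negP: a0_free; apply/ownersP; split=> //; exists u.
    exact: cut_closed At cpu.
  exact: critical_pair_private It Ia0 cpu.
- move=> u cpu; apply: (owner_private_uniq A_I R_tight Dt (cut_closed a0_A cpu) pR) => //.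
  exact: critical_pair_private Ia0 It cpu.
Qed.

End FarVertex.

Lemma indep_le_cut_no_isolated : #|I| <= #|S|.
Proof.
set A := I :\: S; set R := S :\: I.
rewrite -(cardsID S I) -(cardsID I S) setIC leq_add2l -/A -/R leqNgt.
apply/negP => small.
have A_I : A \subset I by apply: subsetDl.
have owned : #|A| <= #|owners A R| + 1.
  by apply: owners_almost_all => // a t u Aa _; apply: cut_closed.
have own_R : #|owners A R| <= #|R| by apply: owners_card.
have R_tight : #|R| <= #|owners A R| by clear -small owned own_R; lia.
have [a0 Aa0 a0_free] : exists2 a0, a0 \in A & a0 \notin owners A R.
  apply/subsetPn; apply: contraTN small => A_owned; rewrite -leqNgt.
  exact: leq_trans (subset_leq_card A_owned) own_R.
have Wa0 : a0 \in W by have [Ia0 a0S] := setDP Aa0; rewrite in_setD a0S indep_V.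
have [z Wz z_sep] := exists_far_vertex Wa0.
by apply: (far_vertex_contra Aa0 a0_free R_tight Wz z_sep).
Qed.

End Cut.

Lemma indep_le_cut S : ~~ connected_on e (V :\: S) -> #|I| <= #|S|.
Proof.
move=> disc; case: (boolP [exists z in V :\: S, [forall y in V :\: S, ~~ e z y]]).
- case/exists_inP => z Wz /forall_inP isolated; have [Vz _] := setDP Wz.
  apply: leq_trans (indep_le_deg Vz) (subset_leq_card _).
  apply/subsetP => x; rewrite inE => /andP [Vx zx]; apply/negPn/negP => xS.
  by move: (isolated x); rewrite in_setD xS Vx zx => /(_ isT).
- move=> no_isolated; apply: indep_le_cut_no_isolated disc _ => x Wx.
  by move/exists_inPn: no_isolated => /(_ x Wx) /forall_inPn [y Wy /negPn xy]; exists y.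
Qed.

Lemma indep_lt_card : #|I| < #|V|.
Proof.
have /card_gt1P [i [j [Ii Ij ij]]] : 1 < #|I| by apply: ltnW.
have [n [Vn in_ _ _]] := exists_nbr_not_adj (indep_V Ii) (indep_V Ij) ij.
apply: proper_card; apply/properP; split=> //; exists n => //.
by apply: contraL in_; apply: I_indep.
Qed.

End Independent.
End Bounds.
End Graph.

Theorem theorem4p1 (T : finType) (e : rel T) (V : {set T}) :
  simple_graph e -> connected_on e V ->
  maximal_vertex_critical 3 e V ->
  alpha e V <= kappa e V.
Proof.
move=> [e_sym e_irr] G_conn [[gamma3 edge_crit] [[V_gt2 kappa2] [_ vertex_crit]]].
have vertex_pairs := vertex_critical_pairs e_sym e_irr G_conn V_gt2 gamma3 kappa2 vertex_crit.
have edge_pairs := edge_critical_pairs e_sym e_irr G_conn V_gt2 gamma3 edge_crit.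
apply/bigmax_leqP => I /andP [I_V /forall_inP I_indep].
have {}I_indep : {in I &, forall x y, ~~ e x y}.
  by move=> x y Ix; move/forall_inP: (I_indep x Ix); apply.
case: (leqP #|I| 2) => [I_le2|I_gt2]; first exact: leq_trans I_le2 kappa2.
apply/(@bigmin_geP _ nat); split.
  have I_lt := indep_lt_card e_sym vertex_pairs I_V I_indep I_gt2.
  by change (#|I| <= #|V|.-1); rewrite -ltnS prednK // (leq_ltn_trans _ I_lt).
move=> S /andP [_ disc]; change (#|I| <= #|S|).
exact: (indep_le_cut e_sym e_irr vertex_pairs edge_pairs I_V I_indep I_gt2 disc).
Qed.
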